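(* Let $\Phi=\{\varphi_j\}_{j=1}^n\subset\mathbb{C}^d$ be an equiangular tight frame which is triply covariant. Then $d=1$, $n=d$, or $n=d+1$. (That is, the only non-trivial triply covariant equiangular tight frames are orthonormal bases and simplices.)
   Context: A set $\Phi=\{\varphi_j\}_{j=1}^n\subset\mathbb{C}^d$ is an equiangular tight frame (ETF) if (1) for all $x\in\mathbb{C}^d$, $x=\frac{d}{n}\sum_{j=1}^n\langle x,\varphi_j\rangle\varphi_j$; (2) $\|\varphi_j\|=1$ for all $j$; (3) there is $\alpha\ge 0$ with $|\langle\varphi_j,\varphi_k\rangle|=\alpha$ for all $j\neq k$. Let $G$ be the group of unitary operators $U$ on $\mathbb{C}^d$ such that there is a permutation $\sigma$ of $\{1,\dots,n\}$ with $U\varphi_j\varphi_j^*U^*=\varphi_{\sigma(j)}\varphi_{\sigma(j)}^*$ for all $j$; the symmetry group of $\Phi$ is $G/S^1$ (i.e. $G$ modulo global unimodular phase factors), which acts on $\{1,\dots,n\}$ via these permutations. $\Phi$ is called $k$-covariant if this action is $k$-transitive, i.e. maps every ordered $k$-tuple of distinct indices to every ordered $k$-tuple of distinct indices; triply covariant means $3$-covariant. The triple product is $\mathrm{TP}(j,k,\ell)=\langle\varphi_j,\varphi_k\rangle\langle\varphi_k,\varphi_\ell\rangle\langle\varphi_\ell,\varphi_j\rangle$, and $\Phi$ is a simplex if all triple products of distinct indices are real and negative. *)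

From HB Require Import structures.
From mathcomp Require Import all_boot all_order all_algebra all_fingroup.
From mathcomp Require Import complex.
From mathcomp Require Import reals.
Set Implicit Arguments. Unset Strict Implicit. Unset Printing Implicit Defensive.
Import Order.TTheory GRing.Theory Num.Theory.
Local Open Scope ring_scope.

Section ETF.
Variable R : realType.
Local Notation C := (R[i]).

Definition adjmx (m k : nat) (A : 'M[C]_(m, k)) : 'M[C]_(k, m) :=
  (map_mx (fun z : C => z^*) A)^T.

(* <x, y> = sum_i x_i * conj(y_i)  (linear in the first argument) *)
Definition inner (d : nat) (x y : 'cV[C]_d) : C :=
  \sum_(i < d) x i 0 * (y i 0)^*.

Definition vnorm (d : nat) (x : 'cV[C]_d) : C := sqrtC (inner x x).

Definition is_ETF (d n : nat) (phi : 'I_n -> 'cV[C]_d) : Prop :=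
  [/\ (forall x : 'cV[C]_d,
         x = (d%:R / n%:R) *: \sum_(j < n) inner x (phi j) *: phi j),
      (forall j, vnorm (phi j) = 1) &
      (exists alpha : C, 0 <= alpha /\
         forall j k : 'I_n, j != k -> `|inner (phi j) (phi k)| = alpha)].

Definition unitary (d : nat) (U : 'M[C]_d) : Prop :=
  U *m adjmx U = 1%:M /\ adjmx U *m U = 1%:M.

Definition proj1mx (d : nat) (v : 'cV[C]_d) : 'M[C]_d := v *m adjmx v.

Definition symmetry_with (d n : nat) (phi : 'I_n -> 'cV[C]_d)
    (U : 'M[C]_d) (sigma : {perm 'I_n}) : Prop :=
  unitary U /\
  forall j, U *m proj1mx (phi j) *m adjmx U = proj1mx (phi (sigma j)).

(* The action of the symmetry group (G modulo phases, which does not change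
   the induced permutations) on {1..n} is 3-transitive: every ordered triple
   of distinct indices is mapped to every ordered triple of distinct indices. *)
Definition triply_covariant (d n : nat) (phi : 'I_n -> 'cV[C]_d) : Prop :=
  forall i1 i2 i3 j1 j2 j3 : 'I_n,
    i1 != i2 -> i1 != i3 -> i2 != i3 ->
    j1 != j2 -> j1 != j3 -> j2 != j3 ->
    exists U : 'M[C]_d, exists sigma : {perm 'I_n},
      symmetry_with phi U sigma /\
      [/\ sigma i1 = j1, sigma i2 = j2 & sigma i3 = j3].

End ETF.

(* With a the common modulus of the off-diagonal inner products, the Gram
   matrix G of a tight frame satisfies G = c G^2 for c = d/n.  Its diagonal
   gives c (1 + (n-1) a^2) = 1, and its (k,l) entry times G_lk gives
   c (2 a^2 + S) = a^2 with S = sum_(j <> k,l) TP(k,j,l).  Triple products are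
   traces of products of projectors, hence invariant under symmetries, so
   triple covariance makes all terms of S equal and |S| = (n-2) a^3.  Taking
   moduli and eliminating a^2 leaves n^2 (d-1) (d-n+1) = 0, unless a = 0 or
   n = 1, where c = 1 and n = d. *)
From HB Require Import structures.
From mathcomp Require Import all_boot all_algebra perm complex reals ring.
Set Implicit Arguments. Unset Strict Implicit. Unset Printing Implicit Defensive.
Import GRing.Theory Num.Theory.
Local Open Scope ring_scope.

Lemma mxtrace_conj3 (K : comNzRingType) m (U V A B D : 'M[K]_m) :
  V *m U = 1%:M ->
  \tr ((U *m A *m V) *m (U *m B *m V) *m (U *m D *m V)) = \tr (A *m B *m D).
Proof.
move=> VU; rewrite -!mulmxA (mulmxA V U) VU mul1mx (mulmxA V U) VU mul1mx.
by rewrite !mulmxA mxtrace_mulC !mulmxA VU mul1mx.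
Qed.

Lemma norm_sum_const (K : numDomainType) (I : finType) (P : {pred I})
    (F : I -> K) (a : K) :
  {in P &, forall i j, F i = F j} -> {in P, forall i, `|F i| = a} ->
  `|\sum_(i in P) F i| = #|P|%:R * a.
Proof.
move=> Fconst Fa; case: (pickP P) => [i0 Pi0 | P0].
  rewrite (eq_bigr (fun=> F i0)) => [|i Pi]; last exact: Fconst.
  by rewrite sumr_const normrMn Fa // mulr_natl.
by rewrite big_pred0 // eq_card0 // normr0 mul0r.
Qed.

Lemma gram_dims_eq (K : comNzRingType) (N D c A : K) :
  c * N = D -> c * (N - 1) * A = 1 - c ->
  c ^+ 2 * (N - 2) ^+ 2 * A = (1 - 2 * c) ^+ 2 ->
  N ^+ 2 * ((D - 1) * (D - N + 1)) = 0.
Proof.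
move=> <- diag offdiag.
have -> : N ^+ 2 * ((c * N - 1) * (c * N - N + 1)) =
    N ^+ 2 * ((N - 1) * ((1 - 2 * c) ^+ 2 - c ^+ 2 * (N - 2) ^+ 2 * A)
              + (N - 2) ^+ 2 * c * (c * (N - 1) * A - (1 - c))) by ring.
by rewrite diag offdiag !subrr; ring.
Qed.

Lemma natr_dims_eq0 (K : numDomainType) (d n : nat) : (0 < n)%N ->
  n%:R ^+ 2 * ((d%:R - 1) * (d%:R - n%:R + 1)) = 0 :> K -> d = 1%N \/ n = d.+1.
Proof.
move=> n_gt0 /eqP; rewrite mulf_eq0 expf_eq0 pnatr_eq0 eqn0Ngt n_gt0 andbF /=.
rewrite mulf_eq0 subr_eq0 pnatr_eq1 addrAC natr1 subr_eq0 eqr_nat.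
by case/orP => /eqP ->; [left | right].
Qed.

Lemma modulus_gram_offdiag (K : numFieldType) (c a m S : K) :
  0 <= c -> 0 <= a -> a != 0 ->
  c * (2 * a ^+ 2 + S) = a ^+ 2 -> `|S| = m * a ^+ 3 ->
  c ^+ 2 * m ^+ 2 * a ^+ 2 = (1 - 2 * c) ^+ 2.
Proof.
move=> c_ge0 a_ge0 a_neq0 offdiag S_norm.
have cS : c * S = a ^+ 2 * (1 - 2 * c) by rewrite mulrBr mulr1 -{1}offdiag; ring.
have real_1_2c : 1 - 2 * c \is Num.real by rewrite rpredB ?rpredM ?ger0_real.
have := congr1 (fun x => `|x| ^+ 2) cS.
rewrite /= !normrM S_norm (ger0_norm c_ge0) (ger0_norm a_ge0) => cS_sq.
apply: (mulfI (expf_neq0 4 a_neq0)); rewrite -(real_normK real_1_2c).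
by transitivity ((c * (m * a ^+ 3)) ^+ 2); [ring | rewrite cS_sq; ring].
Qed.

Section InnerProduct.
Variable R : realType.
Local Notation C := R[i].

Definition triple_product d (x y z : 'cV[C]_d) : C :=
  inner x y * inner y z * inner z x.

Lemma innerZl d (a : C) (x y : 'cV[C]_d) : inner (a *: x) y = a * inner x y.
Proof. by rewrite /inner mulr_sumr; apply: eq_bigr => i _; rewrite mxE mulrA. Qed.

Lemma inner_suml d (I : Type) (r : seq I) (P : pred I) (F : I -> 'cV[C]_d)
    (y : 'cV[C]_d) :
  inner (\sum_(i <- r | P i) F i) y = \sum_(i <- r | P i) inner (F i) y.
Proof.
rewrite /inner exchange_big; apply: eq_bigr => k _.
by rewrite summxE mulr_suml.
Qed.

Lemma conj_inner d (x y : 'cV[C]_d) : (inner x y)^* = inner y x.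
Proof.
rewrite /inner rmorph_sum; apply: eq_bigr => i _.
by rewrite rmorphM /= conjCK mulrC.
Qed.

Lemma inner_mulC d (x y : 'cV[C]_d) : inner x y * inner y x = `|inner x y| ^+ 2.
Proof. by rewrite normCK conj_inner. Qed.

Lemma vnorm1_inner d (x : 'cV[C]_d) : vnorm x = 1 -> inner x x = 1.
Proof. by rewrite /vnorm => x1; rewrite -[inner x x]sqrtCK x1 expr1n. Qed.

Lemma adjmx_mul_inner d (x y : 'cV[C]_d) : adjmx x *m y = (inner y x)%:M.
Proof.
apply/matrixP => i j; rewrite !ord1 !mxE /inner.
by apply: eq_bigr => k _; rewrite !mxE mulrC.
Qed.

Lemma mxtrace_proj1mx3 d (x y z : 'cV[C]_d) :
  \tr (proj1mx z *m proj1mx y *m proj1mx x) = triple_product x y z.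
Proof.
rewrite /proj1mx /triple_product.
have -> : z *m adjmx z *m (y *m adjmx y) *m (x *m adjmx x) =
    z *m (adjmx z *m y) *m (adjmx y *m x) *m adjmx x by rewrite !mulmxA.
rewrite !adjmx_mul_inner !mul_mx_scalar -!scalemxAl !mxtraceZ mxtrace_mulC.
by rewrite adjmx_mul_inner mxtrace_scalar mulr1n !mulrA.
Qed.

End InnerProduct.

Section Frame.
Variables (R : realType) (d n : nat) (phi : 'I_n -> 'cV[R[i]]_d).
Local Notation c := (d%:R / n%:R : R[i]).
Local Notation TP k j l := (triple_product (phi k) (phi j) (phi l)).
Variable a : R[i].
Hypothesis equi : forall j k, j != k -> `|inner (phi j) (phi k)| = a.

Section TightFrame.
Hypothesis tight : forall x, x = c *: \sum_(j < n) inner x (phi j) *: phi j.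

Lemma tight_frame_dim0 : n = 0%N -> d = 0%N.
Proof.
move=> n0; apply/eqP; rewrite eqn0Ngt; apply/negP => d_gt0.
have := congr1 (fun x : 'cV_d => x (Ordinal d_gt0) 0) (tight (const_mx 1)).
rewrite big1 => [|j]; last by have := leq_trans (ltn_ord j) (eq_leq n0).
by rewrite scaler0 !mxE => /eqP; rewrite oner_eq0.
Qed.

Lemma tight_gram k l :
  inner (phi k) (phi l) = c * \sum_j inner (phi k) (phi j) * inner (phi j) (phi l).
Proof.
rewrite {1}(tight (phi k)) innerZl inner_suml.
by congr (_ * _); apply: eq_bigr => j _; rewrite innerZl.
Qed.

Hypothesis unit : forall j, vnorm (phi j) = 1.

Lemma gram_diag (k : 'I_n) : c * (n%:R - 1) * a ^+ 2 = 1 - c.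
Proof.
have n_gt0 : (0 < n)%N := leq_ltn_trans (leq0n k) (ltn_ord k).
have kk := vnorm1_inner (unit k).
have off j : j != k -> inner (phi k) (phi j) * inner (phi j) (phi k) = a ^+ 2.
  by move=> jk; rewrite inner_mulC equi // eq_sym.
have := tight_gram k k; rewrite kk (bigD1 k) //= kk mulr1 (eq_bigr _ off).
have pred_n : n.-1%:R = n%:R - 1 :> R[i].
  by rewrite -{2}(prednK n_gt0) -natr1 addrK.
rewrite sumr_const cardC1 card_ord -[a ^+ 2 *+ _]mulr_natl pred_n => one_eq.
by rewrite [X in X - c]one_eq; ring.
Qed.

Lemma gram_offdiag k l : k != l ->
  c * (2 * a ^+ 2 + \sum_(j in ~: [set k; l]) TP k j l) = a ^+ 2.
Proof.
move=> kl; have kk := vnorm1_inner (unit k); have ll := vnorm1_inner (unit l).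
have -> : 2 * a ^+ 2 + \sum_(j in ~: [set k; l]) TP k j l = \sum_j TP k j l.
  rewrite [RHS](bigD1 k) // [in RHS](bigD1 l) 1?eq_sym //= /triple_product kk ll.
  rewrite mul1r mulr1 inner_mulC equi // mulr_natl mulr2n addrA.
  by congr (_ + _); apply: eq_bigl => j; rewrite !inE negb_or.
by rewrite -mulr_suml mulrA -tight_gram inner_mulC equi.
Qed.

Lemma tight_frame_degenerate_dim (k : 'I_n) : (n <= 1)%N || (a == 0) -> n = d.
Proof.
move=> degenerate; apply/esym/eqP; rewrite -(eqr_nat R[i]).
apply/eqP/divr1_eq/esym/subr0_eq; rewrite -(gram_diag k).
case/orP: degenerate => [n_le1 | /eqP->]; last by rewrite expr0n mulr0.
have -> : n = 1%N by apply/anti_leq; rewrite n_le1 (leq_ltn_trans (leq0n k)).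
by rewrite subrr mulr0 mul0r.
Qed.

End TightFrame.

Lemma triple_product_symmetry U s i j k : symmetry_with phi U s ->
  TP (s i) (s j) (s k) = TP i j k.
Proof.
by case=> [[_ UU] Us]; rewrite -!mxtrace_proj1mx3 -!Us; apply: mxtrace_conj3.
Qed.

Lemma triple_product_covariant k l j j' : triply_covariant phi -> k != l ->
  j \in ~: [set k; l] -> j' \in ~: [set k; l] -> TP k j l = TP k j' l.
Proof.
rewrite !inE !negb_or ![_ == k]eq_sym => cov kl /andP[kj jl] /andP[kj' j'l].
have [U [s [sym [sk sj sl]]]] := cov k j l k j' l kj kl jl kj' kl j'l.
by rewrite -(triple_product_symmetry k j l sym) sk sj sl.
Qed.

Lemma norm_sum_triple_product k l : triply_covariant phi -> k != l ->
  `|\sum_(j in ~: [set k; l]) TP k j l| = (n%:R - 2) * a ^+ 3.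
Proof.
move=> cov kl.
have card_compl : #|~: [set k; l]|%:R = n%:R - 2 :> R[i].
  have := cardsC [set k; l]; rewrite cards2 kl card_ord => card_eq.
  by rewrite -[in RHS]card_eq natrD addrAC subrr add0r.
rewrite -card_compl; apply: norm_sum_const => [j j' | j].
  exact: triple_product_covariant.
rewrite !inE negb_or [j == k]eq_sym => /andP[kj jl].
have lk : l != k by rewrite eq_sym.
by rewrite !normrM !equi //; ring.
Qed.

End Frame.

Theorem mainTheorem1 (R : realType) (d n : nat) (phi : 'I_n -> 'cV[R[i]]_d) :
  is_ETF phi -> triply_covariant phi ->
  [\/ d = 1%N, n = d | n = d.+1].
Proof.
case=> tight unit [a [a_ge0 equi]] cov.
have [n0 | n_gt0] := posnP n.
  by apply: Or32; rewrite n0 (tight_frame_dim0 tight n0).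
pose k : 'I_n := Ordinal n_gt0.
have [degenerate | /norP[n_gt1 a_neq0]] := boolP ((n <= 1)%N || (a == 0)).
  exact/Or32/(tight_frame_degenerate_dim equi tight unit k degenerate).
rewrite -ltnNge in n_gt1; pose l : 'I_n := Ordinal n_gt1.
have kl : k != l by [].
have c_n : d%:R / n%:R * n%:R = d%:R :> R[i] by rewrite mulfVK // pnatr_eq0 -lt0n.
have c_ge0 : 0 <= d%:R / n%:R :> R[i] by rewrite divr_ge0.
have := modulus_gram_offdiag c_ge0 a_ge0 a_neq0
  (gram_offdiag equi tight unit kl) (norm_sum_triple_product equi cov kl).
move/(gram_dims_eq c_n (gram_diag equi tight unit k))/(natr_dims_eq0 n_gt0).
by case=> [d1 | n_d1]; [apply: Or31 | apply: Or33].
Qed.
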